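(* Let $(\mathcal X,\mathcal B,\pi)$ be a measure space with $\pi$ $\sigma$-finite, $r$ measurable, and $\{\varepsilon(x)\}$ an arbitrary real-valued random field. Assume: (a) $p_0$ (and a reference density $p_{\rm ref}$) in $\mathcal P_\pi$ satisfy $\int p|\log p|\,d\pi<\infty$; (b) $\mathbb E_{X\sim p}[e^{|r(X)+\varepsilon(X)|}]<\infty$ for all $p\in\mathcal P_\pi$; (c) $0<Q_*<\infty$, $Q\le Q_*$ everywhere; (d) $\int_Ap_0\,d\pi>0$ where $A=\{Q=Q_*\}$. Let $p_{t+1}(x)=p_t(x)Q(x)/\mathbb E_{X\sim p_t}Q(X)$. Then for all $t$, $$\mathbb E_{X\sim p_{t+1}}Q(X)\ge\mathbb E_{X\sim p_t}Q(X)+\frac{\operatorname{Var}_{X\sim p_t}(Q(X))}{\mathbb E_{X\sim p_t}Q(X)},$$ and $\lim_{t\to\infty}\mathbb E_{X\sim p_t}Q(X)=Q_*$.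
   Context: $\mathcal P_\pi$ = probability densities w.r.t. $\pi$. $Q(x):=e^{r(x)}\mathbb E[e^{\varepsilon(x)}]$ (conditional expectation over the noise independent of $X$), $Q_*:=\operatorname*{ess\,sup}_\pi Q$. *)

From HB Require Import structures.
From mathcomp Require Import all_boot all_order all_algebra.
From mathcomp Require Import all_classical all_reals all_analysis.
From mathcomp Require Import ess_sup_inf.
Set Implicit Arguments. Unset Strict Implicit. Unset Printing Implicit Defensive.
Import Order.TTheory GRing.Theory Num.Def Num.Theory.
Import numFieldNormedType.Exports.
Local Open Scope classical_set_scope.
Local Open Scope ring_scope.

Section defs.
Context {R : realType} {d : measure_display} {T : measurableType d}.
Variable pi : {measure set T -> \bar R}.

Definition is_density (p : T -> R) : Prop :=
  [/\ measurable_fun setT p, (forall x, 0 <= p x) & (\int[pi]_x (p x)%:E = 1)%E].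

(** E_{X ~ p} f(X) (real-valued; the integrals used below are all finite) *)
Definition Ep (p f : T -> R) : R := fine (\int[pi]_x (p x * f x)%:E).

Definition Varp (p f : T -> R) : R := Ep p (fun x => (f x - Ep p f) ^+ 2).

Fixpoint iter_dens (p0 Q : T -> R) (t : nat) : T -> R :=
  match t with
  | 0%N => p0
  | t'.+1 => fun x => iter_dens p0 Q t' x * Q x / Ep (iter_dens p0 Q t') Q
  end.
End defs.

Section Qdef.
Context {R : realType} {d : measure_display} {T : measurableType d}
  {dO : measure_display} {Omega : measurableType dO}.
Variable P : probability Omega R.

Definition Qext (r : T -> R) (eps : T -> Omega -> R) (x : T) : \bar R :=
  ((expR (r x))%:E * \int[P]_w (expR (eps x w))%:E)%E.

Definition Qfun (r : T -> R) (eps : T -> Omega -> R) (x : T) : R :=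
  fine (Qext r eps x).
End Qdef.

(* The update p_{t+1} = p_t Q / E_{p_t} Q reweights p_t by Q, so
   E_{p_{t+1}} Q = E_{p_t}[Q^2] / E_{p_t} Q = E_{p_t} Q + Var_{p_t} Q / E_{p_t} Q.
   For the limit, follow the mass a_t of p_t on the level set A = {Q = Q_*}:
   it is multiplied by Q_* / E_{p_t} Q >= 1 at every step, so it increases,
   stays at most 1 and converges to some l >= a_0 > 0. Hence
   E_{p_t} Q = Q_* a_t / a_{t+1} tends to Q_* l / l = Q_*. *)

From HB Require Import structures.
From mathcomp Require Import all_boot all_order all_algebra.
From mathcomp Require Import all_classical all_reals all_analysis.
From mathcomp Require Import ess_sup_inf measurable_realfun.
From mathcomp Require Import ring lra.
Set Implicit Arguments. Unset Strict Implicit. Unset Printing Implicit Defensive.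
Import Order.TTheory GRing.Theory Num.Def Num.Theory.
Import numFieldNormedType.Exports.
Local Open Scope classical_set_scope.
Local Open Scope ring_scope.

Section tilted_density.
Context {R : realType} {d : measure_display} {T : measurableType d}.
Variable pi : {measure set T -> \bar R}.

Definition tilt (p w : T -> R) (x : T) : R := p x * w x / Ep pi p w.

Lemma iter_densS (p0 Q : T -> R) (t : nat) :
  iter_dens pi p0 Q t.+1 = tilt (iter_dens pi p0 Q t) Q.
Proof. by []. Qed.

Variable p : T -> R.
Hypothesis dp : is_density pi p.

Let mp : measurable_fun setT p. Proof. by case: dp. Qed.
Let p_ge0 x : 0 <= p x. Proof. by case: dp. Qed.
Let int_p : (\int[pi]_x (p x)%:E = 1)%E. Proof. by case: dp. Qed.
Let pE_ge0 x : [set: T] x -> (0 <= (p x)%:E)%E. Proof. by rewrite lee_fin. Qed.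

Let mpE : measurable_fun setT (fun x => (p x)%:E).
Proof. by apply/measurable_EFinP. Qed.

Let mpM (g : T -> R) : measurable_fun setT g ->
  measurable_fun setT (fun x => (p x * g x)%:E).
Proof. by move=> mg; apply/measurable_EFinP; exact: measurable_funM. Qed.

Lemma integral_density_le1 (A : set T) : measurable A ->
  (\int[pi]_(x in A) (p x)%:E <= 1)%E.
Proof. by move=> mA; rewrite -int_p; exact: ge0_subset_integral. Qed.

Let integral_scaled (A : set T) (k : R) : measurable A -> 0 <= k ->
  (\int[pi]_(x in A) (k * p x)%:E = k%:E * \int[pi]_(x in A) (p x)%:E)%E.
Proof.
move=> mA k_ge0; under eq_integral do rewrite EFinM.
have mpA : measurable_fun A (fun x => (p x)%:E) by exact: measurable_funS mpE.
by rewrite (ge0_integralZl pi mA mpA) ?lee_fin // => x _; rewrite lee_fin.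
Qed.

Section bounded.
Variables (g : T -> R) (M : R).
Hypotheses (M_ge0 : 0 <= M) (mg : measurable_fun setT g)
  (g_bounded : forall x, 0 <= g x <= M).

Let pg_ge0 x : 0 <= p x * g x.
Proof. by rewrite mulr_ge0 //; case/andP: (g_bounded x). Qed.

Lemma integral_densityM_le : (\int[pi]_x (p x * g x)%:E <= M%:E)%E.
Proof.
apply: (@le_trans _ _ (\int[pi]_x (M * p x)%:E))%E; last first.
  by rewrite (integral_scaled measurableT M_ge0) int_p mule1.
apply: ge0_le_integral => //.
- by move=> x _; rewrite lee_fin.
- exact: mpM.
- by apply/measurable_EFinP; exact: measurable_funM.
- by move=> x _; rewrite lee_fin mulrC ler_wpM2r //; case/andP: (g_bounded x).
Qed.

Lemma Ep_boundedE : (\int[pi]_x (p x * g x)%:E)%E = (Ep pi p g)%:E.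
Proof.
have I_ge0 : (0 <= \int[pi]_x (p x * g x)%:E)%E.
  by apply: integral_ge0 => x _; rewrite lee_fin.
rewrite /Ep fineK // ge0_fin_numE //.
by rewrite (le_lt_trans integral_densityM_le) ?ltry.
Qed.

Lemma Ep_bounded : 0 <= Ep pi p g <= M.
Proof.
rewrite -!lee_fin -Ep_boundedE integral_densityM_le andbT.
by apply: integral_ge0 => x _; rewrite lee_fin.
Qed.

End bounded.

Variables (w : T -> R) (M : R).
Hypotheses (M_ge0 : 0 <= M) (mw : measurable_fun setT w)
  (w_bounded : forall x, 0 <= w x <= M).

Let m := Ep pi p w.
Let m_ge0 : 0 <= m. Proof. by case/andP: (Ep_bounded M_ge0 mw w_bounded). Qed.
Let pwE_ge0 x : [set: T] x -> (0 <= (p x * w x)%:E)%E.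
Proof. by rewrite lee_fin mulr_ge0 //; case/andP: (w_bounded x). Qed.
Let mw2 : measurable_fun setT (fun x => w x ^+ 2).
Proof. exact: measurable_funX. Qed.
Let w2_bounded x : 0 <= w x ^+ 2 <= M ^+ 2.
Proof. by case/andP: (w_bounded x) => ? ?; rewrite sqr_ge0 ler_sqr. Qed.
Let pw2E_ge0 x : [set: T] x -> (0 <= (p x * w x ^+ 2)%:E)%E.
Proof. by rewrite lee_fin mulr_ge0 ?sqr_ge0. Qed.

Lemma Varp_bounded : Varp pi p w = Ep pi p (fun x => w x ^+ 2) - m ^+ 2.
Proof.
have /andP[_ m_le] : 0 <= m <= M := Ep_bounded M_ge0 mw w_bounded.
have dev_bounded x : 0 <= (w x - m) ^+ 2 <= M ^+ 2.
  by have := m_ge0; case/andP: (w_bounded x) => ? ? ?; rewrite sqr_ge0 /=; nra.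
have mdev := measurable_funX 2 (measurable_funB mw (measurable_cst m)).
have pdevE_ge0 x : [set: T] x -> (0 <= (p x * (w x - m) ^+ 2)%:E)%E.
  by rewrite lee_fin mulr_ge0 ?sqr_ge0.
have mZ (k : R) (f : T -> \bar R) : measurable_fun setT f ->
    measurable_fun setT (fun x => k%:E * f x)%E.
  by move=> mf; apply: emeasurable_funM => //; exact: measurable_cst.
have kE_ge0 (k : R) (f : T -> \bar R) : 0 <= k ->
    (forall x, [set: T] x -> 0 <= f x)%E -> forall x, [set: T] x -> (0 <= k%:E * f x)%E.
  by move=> k_ge0 f_ge0 x _; rewrite mule_ge0 ?lee_fin ?f_ge0.
have twom_ge0 : 0 <= 2 * m by rewrite mulr_ge0.
(* integrate the identity (w - m)^2 + 2 m w = w^2 + m^2 against p *)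
have : (\int[pi]_x ((p x * (w x - m) ^+ 2)%:E + (2 * m)%:E * (p x * w x)%:E)
      = \int[pi]_x ((p x * w x ^+ 2)%:E + (m ^+ 2)%:E * (p x)%:E))%E.
  by apply: eq_integral => x _; rewrite -!EFinM -EFinD; congr (_%:E); ring.
rewrite (ge0_integralD pi measurableT pdevE_ge0 (mpM mdev)
          (@kE_ge0 _ _ twom_ge0 pwE_ge0) (@mZ _ _ (mpM mw))).
rewrite (ge0_integralD pi measurableT pw2E_ge0 (mpM mw2)
          (@kE_ge0 _ _ (sqr_ge0 m) pE_ge0) (@mZ _ _ mpE)).
rewrite (ge0_integralZl pi measurableT (mpM mw) pwE_ge0) ?lee_fin //.
rewrite (ge0_integralZl pi measurableT mpE pE_ge0) ?lee_fin ?sqr_ge0 // int_p mule1.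
rewrite (Ep_boundedE _ mdev dev_bounded) ?sqr_ge0 //.
rewrite (Ep_boundedE _ mw2 w2_bounded) ?sqr_ge0 // (Ep_boundedE M_ge0 mw w_bounded).
by rewrite -!EFinM -!EFinD => -[]; rewrite /Varp -/m; lra.
Qed.

Lemma tilt_density : 0 < m -> is_density pi (tilt p w).
Proof.
move=> m_gt0; split.
- exact: measurable_funM (measurable_funM mp mw) (measurable_cst _).
- by move=> x; rewrite divr_ge0 // mulr_ge0 //; case/andP: (w_bounded x).
- transitivity (\int[pi]_x ((m^-1)%:E * (p x * w x)%:E))%E.
    by apply: eq_integral => x _; rewrite -EFinM mulrC.
  rewrite (ge0_integralZl pi measurableT (mpM mw) pwE_ge0) ?lee_fin ?invr_ge0 //.
  by rewrite (Ep_boundedE M_ge0 mw w_bounded) -EFinM mulVf ?gt_eqF.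
Qed.

Lemma Ep_tilt_self : 0 < m -> Ep pi (tilt p w) w = m + Varp pi p w / m.
Proof.
move=> m_gt0.
have -> : Ep pi (tilt p w) w = m^-1 * Ep pi p (fun x => w x ^+ 2).
  rewrite /Ep; transitivity (fine (\int[pi]_x ((m^-1)%:E * (p x * w x ^+ 2)%:E))%E).
    congr fine; apply: eq_integral => x _.
    by rewrite -EFinM /tilt -/m; congr (_%:E); ring.
  rewrite (ge0_integralZl pi measurableT (mpM mw2) pw2E_ge0) ?lee_fin ?invr_ge0 //.
  by rewrite (Ep_boundedE _ mw2 w2_bounded) ?sqr_ge0.
by rewrite Varp_bounded; field; rewrite gt_eqF.
Qed.

Variables (A : set T) (c : R).
Hypotheses (mA : measurable A) (wA : forall x, A x -> w x = c).

Lemma integral_tilt_level : 0 <= c ->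
  (\int[pi]_(x in A) (tilt p w x)%:E = (c / m)%:E * \int[pi]_(x in A) (p x)%:E)%E.
Proof.
move=> c_ge0; rewrite -integral_scaled ?divr_ge0 //.
by apply: eq_integral => x /[!inE] Ax; rewrite /tilt wA //; congr (_%:E); ring.
Qed.

Lemma Ep_gt0_level : 0 < c -> (0 < \int[pi]_(x in A) (p x)%:E)%E -> 0 < m.
Proof.
move=> c_gt0 Ap_gt0; rewrite -lte_fin -(Ep_boundedE M_ge0 mw w_bounded).
apply: lt_le_trans (ge0_subset_integral pi mA measurableT (mpM mw) pwE_ge0 (subsetT A)).
have -> : (\int[pi]_(x in A) (p x * w x)%:E = \int[pi]_(x in A) (c * p x)%:E)%E.
  by apply: eq_integral => x /[!inE] Ax; rewrite wA // mulrC.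
by rewrite integral_scaled ?ltW // mule_gt0 ?lte_fin.
Qed.

End tilted_density.

Section multiplicative_weights.
Context {R : realType} {d : measure_display} {T : measurableType d}.
Variable pi : {measure set T -> \bar R}.
Variables (Q : T -> R) (Qs : R) (A : set T) (p0 : T -> R).
Hypotheses (mQ : measurable_fun setT Q) (Q_bounded : forall x, 0 <= Q x <= Qs)
  (Qs_gt0 : 0 < Qs) (mA : measurable A) (QA : forall x, A x -> Q x = Qs)
  (dp0 : is_density pi p0) (Ap0_gt0 : (0 < \int[pi]_(x in A) (p0 x)%:E)%E).

Let Qs_ge0 : 0 <= Qs. Proof. exact: ltW. Qed.
Let p := iter_dens pi p0 Q.
Let m t := Ep pi (p t) Q.

Lemma iter_dens_density t :
  is_density pi (p t) /\ (0 < \int[pi]_(x in A) (p t x)%:E)%E.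
Proof.
elim: t => [//|t [dpt Apt_gt0]].
have m_gt0 := Ep_gt0_level dpt Qs_ge0 mQ Q_bounded mA QA Qs_gt0 Apt_gt0.
rewrite /p iter_densS; split; first exact: tilt_density Qs_ge0 mQ Q_bounded m_gt0.
rewrite (integral_tilt_level dpt Qs_ge0 mQ Q_bounded mA QA) //.
by rewrite mule_gt0 ?lte_fin ?divr_gt0.
Qed.

Lemma Ep_iter_dens_bounded t : 0 < m t <= Qs.
Proof.
have [dpt Apt_gt0] := iter_dens_density t.
rewrite (Ep_gt0_level dpt Qs_ge0 mQ Q_bounded mA QA Qs_gt0 Apt_gt0) /=.
by case/andP: (Ep_bounded dpt Qs_ge0 mQ Q_bounded).
Qed.

Lemma Ep_iter_densS t : m t.+1 = m t + Varp pi (p t) Q / m t.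
Proof.
have [dpt _] := iter_dens_density t; have /andP[m_gt0 _] := Ep_iter_dens_bounded t.
by rewrite /m /p iter_densS (Ep_tilt_self dpt Qs_ge0).
Qed.

Let mass t := fine (\int[pi]_(x in A) (p t x)%:E).

Lemma massE t :
  (\int[pi]_(x in A) (p t x)%:E)%E = (mass t)%:E /\ 0 < mass t <= 1.
Proof.
have [dpt Apt_gt0] := iter_dens_density t.
have Apt_le1 := integral_density_le1 dpt mA.
have Apt_fin : (\int[pi]_(x in A) (p t x)%:E)%E \is a fin_num.
  by rewrite ge0_fin_numE ?ltW // (le_lt_trans Apt_le1) ?ltey.
rewrite /mass fineK //; split => //.
by rewrite -lte_fin -lee_fin fineK // Apt_gt0 Apt_le1.
Qed.

Lemma massS t : mass t.+1 = Qs / m t * mass t.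
Proof.
have [dpt _] := iter_dens_density t.
rewrite /mass /p iter_densS (integral_tilt_level dpt Qs_ge0 mQ Q_bounded mA QA) //.
by case: (massE t) => ->.
Qed.

Lemma mass_nondecreasing : nondecreasing_seq mass.
Proof.
apply/nondecreasing_seqP => t; rewrite massS ler_peMl //.
  by case/andP: (massE t).2 => /ltW.
by case/andP: (Ep_iter_dens_bounded t) => m_gt0 m_le; rewrite ler_pdivlMr // mul1r.
Qed.

Lemma Ep_iter_dens_cvg : m @ \oo --> Qs.
Proof.
have mass_cvg : cvgn mass.
  apply: nondecreasing_is_cvgn mass_nondecreasing _.
  by exists 1 => _ [t _ <-]; case/andP: (massE t).2.
have l_gt0 : 0 < limn mass.
  apply: lt_le_trans (nondecreasing_cvgn_le mass_nondecreasing mass_cvg 0).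
  by case/andP: (massE 0).2.
have -> : m = fun t => Qs * mass t / mass t.+1.
  apply/funext => t; rewrite massS; have [_ /andP[mass_gt0 _]] := massE t.
  by have /andP[m_gt0 _] := Ep_iter_dens_bounded t; field; rewrite !gt_eqF.
have mass_lim : mass @ \oo --> limn mass by exact: mass_cvg.
have mass_shift_lim : (fun t => mass t.+1) @ \oo --> limn mass by rewrite cvg_shiftS.
have := cvgM (cvgM (cvg_cst Qs) mass_lim) (cvgV (lt0r_neq0 l_gt0) mass_shift_lim).
by rewrite mulfK ?gt_eqF //; apply.
Qed.

End multiplicative_weights.

Section expected_exponential.
Context {R : realType} {d : measure_display} {T : measurableType d}
  {dO : measure_display} {Omega : measurableType dO}.
Variables (P : probability Omega R) (r : T -> R) (eps : T -> Omega -> R).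

Lemma Qext_ge0 x : (0 <= Qext P r eps x)%E.
Proof.
rewrite mule_ge0 ?lee_fin ?expR_ge0 //.
by apply: integral_ge0 => w _; rewrite lee_fin expR_ge0.
Qed.

Lemma measurable_Qext : measurable_fun setT r ->
  measurable_fun setT (fun xw : T * Omega => eps xw.1 xw.2) ->
  measurable_fun setT (Qext P r eps).
Proof.
move=> mr meps; apply: emeasurable_funM.
  by apply/measurable_EFinP; exact: measurableT_comp mr.
have mexp_eps : measurable_fun setT
    (fun xw : T * Omega => (expR (eps xw.1 xw.2))%:E).
  by apply/measurable_EFinP; exact: measurableT_comp meps.
have exp_eps_ge0 (xw : T * Omega) : (0 <= (expR (eps xw.1 xw.2))%:E)%E.
  by rewrite lee_fin expR_ge0.
exact: (measurable_fun_fubini_tonelli_F (m2 := P) _ mexp_eps exp_eps_ge0).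
Qed.

End expected_exponential.

Theorem lemma4 (R : realType) (d : measure_display) (T : measurableType d)
  (pi : {measure set T -> \bar R})
  (dO : measure_display) (Omega : measurableType dO) (P : probability Omega R)
  (r : T -> R) (eps : T -> Omega -> R) (p0 pref : T -> R) :
  sigma_finite setT pi ->
  measurable_fun setT r ->
  measurable_fun setT (fun xw : T * Omega => eps xw.1 xw.2) ->
  (* (a) *)
  is_density pi p0 -> is_density pi pref ->
  (\int[pi]_x (p0 x * `|ln (p0 x)|)%:E < +oo)%E ->
  (\int[pi]_x (pref x * `|ln (pref x)|)%:E < +oo)%E ->
  (* (b) *)
  (forall p : T -> R, is_density pi p ->
     (\int[pi]_x ((p x)%:E * \int[P]_w (expR `|r x + eps x w|)%:E) < +oo)%E) ->
  (* (c) *)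
  (0 < ess_sup pi (Qext P r eps) < +oo)%E ->
  (forall x, (Qext P r eps x <= ess_sup pi (Qext P r eps))%E) ->
  (* (d) *)
  (0 < \int[pi]_(x in [set x | Qext P r eps x = ess_sup pi (Qext P r eps)])
          (p0 x)%:E)%E ->
  (forall t : nat,
     Ep pi (iter_dens pi p0 (Qfun P r eps) t) (Qfun P r eps)
     + Varp pi (iter_dens pi p0 (Qfun P r eps) t) (Qfun P r eps)
       / Ep pi (iter_dens pi p0 (Qfun P r eps) t) (Qfun P r eps)
     <= Ep pi (iter_dens pi p0 (Qfun P r eps) t.+1) (Qfun P r eps))
  /\
  (fun t : nat => Ep pi (iter_dens pi p0 (Qfun P r eps) t) (Qfun P r eps))
     @ \oo --> fine (ess_sup pi (Qext P r eps)).
Proof.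
(* Only (c), (d) and the measurability of r and eps are needed: by (c), Q is
   bounded, which makes every expectation in the statement finite. *)
move=> _ mr meps dp0 _ _ _ _ /andP[Qs_gt0 Qs_ltoo] Qext_le A_gt0.
set Qs := ess_sup pi (Qext P r eps) in Qs_gt0 Qs_ltoo Qext_le A_gt0 *.
have Qext_fin x : Qext P r eps x \is a fin_num.
  by rewrite ge0_fin_numE ?Qext_ge0 // (le_lt_trans (Qext_le x)).
have Qs_fin : Qs \is a fin_num by rewrite ge0_fin_numE ?ltW.
have fine_Qs_gt0 : 0 < fine Qs by rewrite fine_gt0 // Qs_gt0 Qs_ltoo.
have mQext := measurable_Qext P mr meps.
have mQ : measurable_fun setT (Qfun P r eps).
  exact: measurableT_comp (fine_measurable measurableT) mQext.
have Q_bounded x : 0 <= Qfun P r eps x <= fine Qs.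
  by rewrite fine_ge0 ?Qext_ge0 // fine_le.
have mA : measurable [set x | Qext P r eps x = Qs].
  by rewrite -[X in measurable X]setTI; exact: mQext measurableT _ (emeasurable_set1 Qs).
have QA x : Qext P r eps x = Qs -> Qfun P r eps x = fine Qs by rewrite /Qfun => ->.
split => [t|].
  by rewrite (Ep_iter_densS mQ Q_bounded fine_Qs_gt0 mA QA dp0 A_gt0).
exact: Ep_iter_dens_cvg mQ Q_bounded fine_Qs_gt0 mA QA dp0 A_gt0.
Qed.
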